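(* Let $G_0,G_1\in\mathbb{Z}$ and let $(G_n)_{n\ge 0}$ be defined by $G_n=G_{n-1}+G_{n-2}$ for $n\ge 2$. For every integer $k \geq 1$, $$\mathcal{G}^2_{G_0,G_1}(k) = \gcd\left(G_k G_{k+1} - G_0 G_1,\; G_{k+1}^2 - G_1^2,\; G_{k+2}^2 - G_2^2\right),$$ where $\mathcal{G}^2_{G_0,G_1}(k)$ denotes the greatest common divisor of all the integers $\sum_{i=1}^k G_{n+i}^2$ for $n \ge 0$.
   Context: $(G_n)_{n\ge0}$ is a generalized Fibonacci (Gibonacci) sequence with arbitrary integer initial values $G_0,G_1$. $\mathcal{G}^2_{G_0,G_1}(k)=\gcd\{\sum_{i=1}^k G_{n+i}^2 : n\ge 0\}$, the gcd of the infinitely many sums of $k$ consecutive squares starting after index $n$ (taken nonnegative). *)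

From Stdlib Require Import ZArith List.
Open Scope Z_scope.

Fixpoint gib (G0 G1 : Z) (n : nat) : Z :=
  match n with
  | O => G0
  | S O => G1
  | S ((S m) as p) => gib G0 G1 p + gib G0 G1 m
  end.

Definition sq_block (G0 G1 : Z) (k n : nat) : Z :=
  fold_right Z.add 0
    (map (fun i => (gib G0 G1 (n + i)) ^ 2) (seq 1 k)).

Definition is_gcd_of_family (f : nat -> Z) (d : Z) : Prop :=
  0 <= d /\ (forall n, (d | f n)) /\
  (forall c, (forall n, (c | f n)) -> (c | d)).

Definition GibSqGcd (G0 G1 : Z) (k : nat) (d : Z) : Prop :=
  is_gcd_of_family (sq_block G0 G1 k) d.

Example gib_test : map (gib 0 1) (seq 0 8) = (0::1::1::2::3::5::8::13::nil)%list.
Proof. reflexivity. Qed.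
Lemma gib_rec : forall G0 G1 n, gib G0 G1 (S (S n)) = gib G0 G1 (S n) + gib G0 G1 n.
Proof. reflexivity. Qed.
Example sq_test : sq_block 0 1 2 1 = 1 + 4.
Proof. reflexivity. Qed.

(** The sums [S_n = G_(n+1)^2 + ... + G_(n+k)^2] telescope, since
    [G_(m+1)^2 = G_(m+1) G_(m+2) - G_m G_(m+1)], to [P_(n+k) - P_n] with
    [P_m = G_m G_(m+1)].  The products [P_m] satisfy the integer recurrence
    [P_(m+3) = 2 P_(m+2) + 2 P_(m+1) - P_m], hence so does [n |-> S_n], and the
    gcd of all [S_n] is the gcd of [S_0], [S_1], [S_2], i.e. of [S_0],
    [S_1 - S_0], [S_2 - S_1], which are the three numbers of the statement. *)

From Stdlib Require Import ZArith List Lia.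
Open Scope Z_scope.

Lemma is_gcd_of_family_rec3 (a b c : Z) (f : nat -> Z) (d : Z) :
  (forall n, f (S (S (S n))) = a * f (S (S n)) + b * f (S n) + c * f n) ->
  0 <= d ->
  (forall q, (q | d) <-> (q | f 0%nat) /\ (q | f 1%nat) /\ (q | f 2%nat)) ->
  is_gcd_of_family f d.
Proof.
  intros f_rec d_ge0 d_div.
  split; [exact d_ge0 | split].
  - assert (d_div3 : forall n, (d | f n) /\ (d | f (S n)) /\ (d | f (S (S n)))).
    { induction n as [|n (IH0 & IH1 & IH2)].
      - apply d_div, Z.divide_refl.
      - repeat split; try assumption.
        rewrite f_rec.
        repeat apply Z.divide_add_r; apply Z.divide_mul_r; assumption. }
    intro n; apply d_div3.
  - intros q q_div; apply d_div; auto.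
Qed.

Lemma divide_partial_sums3_iff (q x y z : Z) :
  (q | x) /\ (q | x + y) /\ (q | x + y + z) <-> (q | x) /\ (q | y) /\ (q | z).
Proof.
  split.
  - intros (qx & qxy & qxyz); repeat split; try assumption.
    + replace y with (x + y - x) by ring; apply Z.divide_sub_r; assumption.
    + replace z with (x + y + z - (x + y)) by ring; apply Z.divide_sub_r; assumption.
  - intros (qx & qy & qz); repeat split; repeat apply Z.divide_add_r; assumption.
Qed.

Section GibonacciSquares.

Variables G0 G1 : Z.

Notation G := (gib G0 G1).

Definition gib_prod (m : nat) : Z := G m * G (S m).

Lemma gib_sq_telescope (m : nat) :
  G (S m) ^ 2 = gib_prod (S m) - gib_prod m.
Proof. unfold gib_prod; rewrite gib_rec; ring. Qed.

Lemma gib_prod_rec3 (m : nat) :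
  gib_prod (S (S (S m)))
  = 2 * gib_prod (S (S m)) + 2 * gib_prod (S m) - gib_prod m.
Proof. unfold gib_prod; rewrite !gib_rec; ring. Qed.

Lemma sq_block_S (k n : nat) :
  sq_block G0 G1 (S k) n = G (S n) ^ 2 + sq_block G0 G1 k (S n).
Proof.
  unfold sq_block; cbn [seq map fold_right].
  rewrite Nat.add_1_r, <- seq_shift, map_map.
  do 2 f_equal; apply map_ext; intro i.
  now rewrite Nat.add_succ_comm.
Qed.

Lemma sq_block_telescope (k n : nat) :
  sq_block G0 G1 k n = gib_prod (n + k) - gib_prod n.
Proof.
  revert n; induction k as [|k IH]; intro n.
  - rewrite Nat.add_0_r; unfold sq_block; cbn; ring.
  - rewrite sq_block_S, IH, gib_sq_telescope, Nat.add_succ_r; cbn [Nat.add]; ring.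
Qed.

Lemma sq_block_rec3 (k n : nat) :
  sq_block G0 G1 k (S (S (S n)))
  = 2 * sq_block G0 G1 k (S (S n)) + 2 * sq_block G0 G1 k (S n)
    - sq_block G0 G1 k n.
Proof.
  rewrite !sq_block_telescope; cbn [Nat.add].
  rewrite !gib_prod_rec3; ring.
Qed.

Lemma sq_block_succ (k n : nat) :
  sq_block G0 G1 k (S n)
  = sq_block G0 G1 k n + (G (S (n + k)) ^ 2 - G (S n) ^ 2).
Proof.
  rewrite !sq_block_telescope, !gib_sq_telescope; cbn [Nat.add]; ring.
Qed.

End GibonacciSquares.

Theorem theorem3p4 (G0 G1 : Z) (k : nat) (hk : (1 <= k)%nat) :
  GibSqGcd G0 G1 k
    (Z.gcd (Z.gcd (gib G0 G1 k * gib G0 G1 (k + 1) - G0 * G1)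
                  (gib G0 G1 (k + 1) ^ 2 - G1 ^ 2))
           (gib G0 G1 (k + 2) ^ 2 - gib G0 G1 2 ^ 2)).
Proof.
  apply (is_gcd_of_family_rec3 2 2 (-1)).
  - intro n; rewrite sq_block_rec3; ring.
  - apply Z.gcd_nonneg.
  - intro q.
    rewrite (sq_block_succ _ _ k 1), (sq_block_succ _ _ k 0),
      divide_partial_sums3_iff, sq_block_telescope.
    rewrite !Z.gcd_divide_iff, and_assoc.
    replace (k + 2)%nat with (S (S k)) by lia; rewrite Nat.add_1_r.
    reflexivity.
Qed.
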